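(* For $g\ge 1$ let $\phi_g$ be the number of maximum matchings of $\mathcal{F}_g\setminus\{v_1,v_2\}$, let $\varphi_g$ be the number of maximum matchings of $\mathcal{F}_g\setminus\{v_1\}$, and let $\theta_g$ be the number of maximum matchings of $\mathcal{F}_g$. Then $\phi_1=1$, $\varphi_1=2$, $\theta_1=2$, and for all $g\ge 1$, $$\phi_{g+1}=4\phi_g^2\varphi_g^2,\qquad \varphi_{g+1}=4\phi_g^2\varphi_g\theta_g+4\phi_g\varphi_g^3,\qquad \theta_{g+1}=2\phi_g^2\theta_g^2+2\varphi_g^4+12\phi_g\varphi_g^2\theta_g .$$
   Context: The graphs $\mathcal{F}_g$ with four distinguished ''hub'' vertices $v_1,v_2,v_3,v_4$ are defined recursively. $\mathcal{F}_1$ is the 4-cycle with edges $\{v_1,v_3\},\{v_3,v_2\},\{v_2,v_4\},\{v_4,v_1\}$ (so $v_1,v_2$ are diagonal, and $v_3,v_4$ are diagonal). For $g>1$, take four disjoint copies $\mathcal{F}_{g-1}^{(i)}$, $i=1,2,3,4$, of $\mathcal{F}_{g-1}$, with hubs $v_k^{(i)}$ corresponding to $v_k$; then identify $v_1^{(1)}$ with $v_1^{(4)}$ to form the hub $v_1$ of $\mathcal{F}_g$, identify $v_2^{(2)}$ with $v_1^{(3)}$ to form $v_2$, identify $v_2^{(1)}$ with $v_1^{(2)}$ to form $v_3$, and identify $v_2^{(3)}$ with $v_2^{(4)}$ to form $v_4$. (Equivalently, $\mathcal{F}_g$ arises from $\mathcal{F}_{g-1}$ by replacing each edge $\{u,v\}$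 by two new vertices each adjacent to both $u$ and $v$, deleting the edge $\{u,v\}$.) For a graph $G$ and vertex set $S$, $G\setminus S$ denotes the subgraph induced on the vertices not in $S$. A maximum matching is a matching of maximum cardinality. *)

From mathcomp Require Import all_boot.
Set Implicit Arguments. Unset Strict Implicit. Unset Printing Implicit Defensive.

(* G \ S is the subgraph induced on the vertices outside S. *)
Definition is_matching (T : finType) (e : rel T) (S : {set T})
    (M : {set {set T}}) : bool :=
  [forall E in M, exists u, exists v,
      [&& E == [set u; v], u != v, e u v, u \notin S & v \notin S]] &&
  [forall E1 in M, forall E2 in M, (E1 != E2) ==> [disjoint E1 & E2]].

Definition num_max_matchings (T : finType) (e : rel T) (S : {set T}) : nat :=
  #|[set M : {set {set T}} | is_matching e S M &&
      [forall M' : {set {set T}}, is_matching e S M' ==> (#|M'| <= #|M|)]]|.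

(* A graph is encoded as (number of vertices n, list of edges on 0..n-1).
   Hubs: v1 = 0, v2 = 1, v3 = 2, v4 = 3.
   F_1: the 4-cycle v1 - v3 - v2 - v4 - v1. *)
Definition F1data : nat * seq (nat * nat) := (4, [:: (0, 2); (2, 1); (1, 3); (3, 0)]).

Definition subdivide (d : nat * seq (nat * nat)) : nat * seq (nat * nat) :=
  let: (n, es) := d in
  (n + 2 * size es,
   flatten [seq let: (k, (u, v)) := p in
              [:: (u, n + 2 * k); (n + 2 * k, v); (u, n + 2 * k + 1); (n + 2 * k + 1, v)]
           | p <- zip (iota 0 (size es)) es]).

(* Fdata g = data of F_g for g >= 1 (Fdata 0 is unused, set to F_1) *)
Definition Fdata (g : nat) : nat * seq (nat * nat) := iter g.-1 subdivide F1data.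

Definition Fvert (g : nat) : finType := 'I_(Fdata g).1.

Definition Fadj (g : nat) : rel (Fvert g) :=
  fun x y => ((val x, val y) \in (Fdata g).2) || ((val y, val x) \in (Fdata g).2).

Definition hubs12 (g : nat) : {set Fvert g} := [set x : Fvert g | val x \in [:: 0; 1]].
Definition hub1 (g : nat) : {set Fvert g} := [set x : Fvert g | val x == 0].

Definition Fphi (g : nat) : nat := num_max_matchings (@Fadj g) (hubs12 g).
Definition Fvarphi (g : nat) : nat := num_max_matchings (@Fadj g) (hub1 g).
Definition Ftheta (g : nat) : nat := num_max_matchings (@Fadj g) set0.

(* F_(g+1) is F_g with every edge uv replaced by a gadget, the 4-cycle u x v y on two new
   vertices.  So F_(g+1) is bipartite between the old vertices and the new ones, and for a set S
   of hubs the maximum matchings of F_(g+1) \ S are the matchings covering every old vertex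
   outside S.  Such a matching is recorded by the state of each edge uv of F_g, i.e. which of u
   and v its gadget covers, so their number is a count of states on F_g weighted by the number of
   matchings inside each gadget.  Repeating this down the subdivision levels lands on the 4-cycle
   F_1, whose edges then carry the weights phi_g, varphi_g, theta_g according to how many of
   their ends are covered; enumerating the 4^4 states of F_1 gives the recursions. *)

From mathcomp Require Import all_boot zify ring.
Set Implicit Arguments. Unset Strict Implicit. Unset Printing Implicit Defensive.

(** * Weighted counts of edge states *)

(* A state (a, b) of an edge (u, v) tells whether u, resp. v, is covered through that edge. *)
Notation state := (bool * bool)%type.

Definition end_load (e : nat * nat) (x : state) (v : nat) : nat :=
  (e.1 == v) * x.1 + (e.2 == v) * x.2.

Definition load (K : finType) (E : K -> nat * nat) (p : {ffun K -> state}) (v : nat) : nat :=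
  \sum_k end_load (E k) (p k) v.

Definition admissible (K : finType) (E : K -> nat * nat) (N : nat)
    (ok : nat -> nat -> bool) (p : {ffun K -> state}) : bool :=
  all (fun v => ok v (load E p v)) (iota 0 N).

Definition wcount (K : finType) (E : K -> nat * nat) (N : nat)
    (ok : nat -> nat -> bool) (w : state -> nat) : nat :=
  \sum_(p : {ffun K -> state} | admissible E N ok p) \prod_k w (p k).

Lemma wcount_reindex (K1 K2 : finType) (h : K1 -> K2)
    (E1 : K1 -> nat * nat) (E2 : K2 -> nat * nat) N ok w :
  bijective h -> (forall k, E2 (h k) = E1 k) -> wcount E2 N ok w = wcount E1 N ok w.
Proof.
move=> [h' hK h'K] hE.
have bij_h : {on [pred i | true], bijective h} by exists h'.
rewrite /wcount (reindex (fun p : {ffun K1 -> state} => [ffun k => p (h' k)])) /=.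
  apply: eq_big => [p|p _].
    apply: eq_all => v; congr (ok v _).
    by rewrite /load (reindex h) //=; apply: eq_bigr => k _; rewrite ffunE hK hE.
  by rewrite (reindex h) //=; apply: eq_bigr => k _; rewrite ffunE hK.
exists (fun p : {ffun K2 -> state} => [ffun k => p (h k)]) => p _;
  by apply/ffunP => k; rewrite !ffunE ?hK ?h'K.
Qed.

Lemma eq_wcount (K : finType) (E : K -> nat * nat) N ok1 ok2 w1 w2 :
  (forall v c, v < N -> ok1 v c = ok2 v c) -> w1 =1 w2 ->
  wcount E N ok1 w1 = wcount E N ok2 w2.
Proof.
move=> eq_ok eq_w; apply: eq_big => [p|p _].
  by apply: eq_in_all => v; rewrite mem_iota => /andP[_ ltvN]; exact: eq_ok.
by apply: eq_bigr => k _; rewrite eq_w.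
Qed.

Lemma wcount_pair (K1 K2 : finType) (E : K1 * K2 -> nat * nat) N ok w :
  wcount E N ok w =
  \sum_(P : {ffun K1 -> {ffun K2 -> state}} |
          all (fun v => ok v (\sum_k \sum_j end_load (E (k, j)) (P k j) v)) (iota 0 N))
     \prod_k \prod_j w (P k j).
Proof.
rewrite /wcount (reindex (fun P : {ffun K1 -> {ffun K2 -> state}} => [ffun kj => P kj.1 kj.2])) /=.
  apply: eq_big => [P|P _].
    apply: eq_all => v; congr (ok v _); rewrite /load pair_bigA.
    by apply: eq_bigr => -[k j] _; rewrite ffunE.
  by rewrite pair_bigA; apply: eq_bigr => -[k j] _; rewrite ffunE.
exists (fun p : {ffun K1 * K2 -> state} => [ffun k => [ffun j => p (k, j)]]) => p _.
  by apply/ffunP => k; apply/ffunP => j; rewrite !ffunE.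
by apply/ffunP => -[k j]; rewrite !ffunE.
Qed.

Definition j0 : 'I_4 := @Ordinal 4 0 isT.
Definition j1 : 'I_4 := @Ordinal 4 1 isT.
Definition j2 : 'I_4 := @Ordinal 4 2 isT.
Definition j3 : 'I_4 := @Ordinal 4 3 isT.

Lemma big_ord4 (R : Type) (idx : R) (op : Monoid.law idx) (F : 'I_4 -> R) :
  \big[op/idx]_(j < 4) F j = op (op (op (F j0) (F j1)) (F j2)) (F j3).
Proof.
rewrite !big_ord_recr big_ord0 /= Monoid.mul1m.
by congr (op (op (op _ _) _) _); congr F; apply: val_inj.
Qed.

(** * Collapsing the gadgets of a subdivision *)

(* The j-th edge of the gadget replacing the k-th edge uv of a graph on n vertices, in the order
   used by subdivide: ux, xv, uy, yv with x = n + 2k and y = n + 2k + 1. *)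
Definition gadget_edge (n k : nat) (e : nat * nat) (j : nat) : nat * nat :=
  nth (0, 0) [:: (e.1, n + 2 * k); (n + 2 * k, e.2);
               (e.1, n + 2 * k + 1); (n + 2 * k + 1, e.2)] j.

Definition subdiv_edges (n k0 : nat) (es : seq (nat * nat)) : seq (nat * nat) :=
  flatten [seq let: (k, (u, v)) := p in
             [:: (u, n + 2 * k); (n + 2 * k, v); (u, n + 2 * k + 1); (n + 2 * k + 1, v)]
          | p <- zip (iota k0 (size es)) es].

Lemma subdivideE d : subdivide d = (d.1 + 2 * size d.2, subdiv_edges d.1 0 d.2).
Proof. by case: d. Qed.

Lemma size_subdiv_edges n k0 es : size (subdiv_edges n k0 es) = 4 * size es.
Proof.
elim: es k0 => [|[u v] es IH] k0 //=.
by rewrite /subdiv_edges /= -/(subdiv_edges n k0.+1 es) IH /=; lia.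
Qed.

Lemma nth_subdiv_edges n k0 es k j : k < size es -> j < 4 ->
  nth (0, 0) (subdiv_edges n k0 es) (4 * k + j) = gadget_edge n (k0 + k) (nth (0, 0) es k) j.
Proof.
elim: es k0 k => [|[u v] es IH] k0 k //= ltk ltj.
rewrite /subdiv_edges /= -/(subdiv_edges n k0.+1 es).
case: k ltk => [|k] ltk; first by clear IH; rewrite addn0; case: j ltj => [|[|[|[|]]]].
rewrite (_ : 4 * k.+1 + j = (4 * k + j).+4); last by lia.
by rewrite /= IH // addSnnS.
Qed.

Definition nth_edge (es : seq (nat * nat)) (k : 'I_(size es)) : nat * nat := nth (0, 0) es k.

Lemma all_iota_pairs (f : nat -> bool) n m :
  all f (iota n (2 * m)) = all (fun k => f (n + 2 * k) && f (n + 2 * k + 1)) (iota 0 m).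
Proof.
elim: m => [|m IH] //.
rewrite (_ : 2 * m.+1 = 2 * m + 2); last by lia.
rewrite iotaD all_cat IH -(addn1 m) (iotaD 0 m 1) all_cat /= !andbT add0n.
by rewrite addn1.
Qed.

Lemma eqn_eqb1 (c : nat) : (c == (c == 1) :> nat) = (c <= 1).
Proof. by case: c => [|[|c]]. Qed.

Lemma eqb1_le1 (c : nat) : c <= 1 -> (c == 1 :> nat) = c :> nat.
Proof. by case: c => [|[|c]]. Qed.

Definition claim_u (q : {ffun 'I_4 -> state}) : nat := (q j0).1 + (q j2).1.
Definition claim_v (q : {ffun 'I_4 -> state}) : nat := (q j1).2 + (q j3).2.
Definition claim_x (q : {ffun 'I_4 -> state}) : nat := (q j0).2 + (q j1).1.
Definition claim_y (q : {ffun 'I_4 -> state}) : nat := (q j2).2 + (q j3).1.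

Definition gadget_ok (okN : nat -> bool) (a : state) (q : {ffun 'I_4 -> state}) : bool :=
  [&& claim_u q == a.1, claim_v q == a.2, okN (claim_x q) & okN (claim_y q)].

Definition gadget_weight (okN : nat -> bool) (w : state -> nat) (a : state) : nat :=
  \sum_(q | gadget_ok okN a q) \prod_j w (q j).

Lemma load_gadget n k e (q : {ffun 'I_4 -> state}) v :
  \sum_(j < 4) end_load (gadget_edge n k e j) (q j) v =
  (e.1 == v) * claim_u q + (e.2 == v) * claim_v q
  + (n + 2 * k == v) * claim_x q + (n + 2 * k + 1 == v) * claim_y q.
Proof. rewrite big_ord4 /end_load /claim_u /claim_v /claim_x /claim_y /=; ring. Qed.

Definition split_ok (n : nat) (okO : nat -> nat -> bool) (okN : nat -> bool) (v c : nat) : bool :=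
  if v < n then okO v c else okN c.

Section Subdivision.
Variables (n : nat) (es : seq (nat * nat)).
Let m := size es.
Let E := @nth_edge es.
Hypothesis es_lt : forall k : 'I_m, (E k).1 < n /\ (E k).2 < n.
Variables (okO : nat -> nat -> bool) (okN : nat -> bool).
(* A state only records whether an end is covered, so old vertices may be loaded at most once. *)
Hypothesis okO_le1 : forall v c, v < n -> okO v c -> c <= 1.

Implicit Type P : {ffun 'I_m -> {ffun 'I_4 -> state}}.

Definition subdiv_load P v :=
  \sum_(k < m) \sum_(j < 4) end_load (gadget_edge n k (E k) j) (P k j) v.

Definition outer_load P v :=
  \sum_(k < m) (((E k).1 == v) * claim_u (P k) + ((E k).2 == v) * claim_v (P k)).

Definition outer_states P : {ffun 'I_m -> state} :=
  [ffun k => (claim_u (P k) == 1, claim_v (P k) == 1)].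

Definition subdiv_ok P :=
  all (fun v => split_ok n okO okN v (subdiv_load P v)) (iota 0 (n + 2 * m)).

Lemma subdiv_load_old P v : v < n -> subdiv_load P v = outer_load P v.
Proof.
by move=> ltvn; apply: eq_bigr => k _; rewrite load_gadget; lia.
Qed.

Lemma subdiv_load_new P (k : 'I_m) :
  subdiv_load P (n + 2 * k) = claim_x (P k) /\ subdiv_load P (n + 2 * k + 1) = claim_y (P k).
Proof.
suff load_at b : b < 2 ->
    subdiv_load P (n + 2 * k + b) = if b == 0 then claim_x (P k) else claim_y (P k).
  by split; [rewrite -[n + 2 * k]addn0 load_at | rewrite load_at].
move=> ltb2; have [lt1 lt2] := es_lt k.
rewrite /subdiv_load (bigD1 k) //= [X in _ + X]big1 => [|k' /eqP nek].
  by rewrite load_gadget; case: b ltb2 => [|[|]] //= _; lia.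
have ne : (k' : nat) <> k by move=> /val_inj.
by have [lt1' lt2'] := es_lt k'; rewrite load_gadget; lia.
Qed.

Lemma subdiv_okE P :
  subdiv_ok P = all (fun v => okO v (outer_load P v)) (iota 0 n)
                && [forall k, okN (claim_x (P k)) && okN (claim_y (P k))].
Proof.
rewrite /subdiv_ok iotaD all_cat add0n all_iota_pairs; congr andb.
  apply: eq_in_all => v; rewrite mem_iota => /andP[_ ltvn].
  by rewrite /split_ok ltvn subdiv_load_old.
have split_new v c : n <= v -> split_ok n okO okN v c = okN c.
  by move=> lenv; rewrite /split_ok ltnNge lenv.
apply/allP/forallP => [ok_new k | ok_new k k_in].
  have [<- <-] := subdiv_load_new P k.
  have k_in : (k : nat) \in iota 0 m by rewrite mem_iota ltn_ord.
  by move: (ok_new k k_in); rewrite !split_new //; lia.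
have ltkm : k < m by move: k_in; rewrite mem_iota.
move: (ok_new (Ordinal ltkm)); have [/= -> ->] := subdiv_load_new P (Ordinal ltkm).
by rewrite !split_new //; lia.
Qed.

Lemma outer_claims_le1 P (k : 'I_m) : all (fun v => okO v (outer_load P v)) (iota 0 n) ->
  claim_u (P k) <= 1 /\ claim_v (P k) <= 1.
Proof.
move=> /allP ok_old; have [lt1 lt2] := es_lt k.
have le1 v : v < n -> outer_load P v <= 1.
  by move=> ltvn; apply: (okO_le1 ltvn); apply: ok_old; rewrite mem_iota.
by split; [move: (le1 _ lt1) | move: (le1 _ lt2)]; rewrite /outer_load (bigD1 k) //= eqxx; lia.
Qed.

Lemma load_outer_states P v : (forall k, claim_u (P k) <= 1 /\ claim_v (P k) <= 1) ->
  load E (outer_states P) v = outer_load P v.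
Proof.
move=> le1; apply: eq_bigr => k _; rewrite /end_load ffunE /=.
by have [/eqb1_le1 -> /eqb1_le1 ->] := le1 k.
Qed.

Lemma admissible_familyE P (p : {ffun 'I_m -> state}) :
  admissible E n okO p && (P \in family (fun k => gadget_ok okN (p k))) =
  (p == outer_states P) && subdiv_ok P.
Proof.
apply/idP/idP => [/andP[adm_p /familyP fam] | /andP[/eqP-> ok_P]].
  have p_outer : p = outer_states P.
    apply/ffunP => k; rewrite ffunE; case/and4P: (fam k) => /eqP-> /eqP-> _ _.
    by case: (p k) => [[] []].
  have le1 k : claim_u (P k) <= 1 /\ claim_v (P k) <= 1.
    by move: (fam k); rewrite p_outer unfold_in /gadget_ok ffunE /= !eqn_eqb1 => /and4P[].
  rewrite p_outer eqxx /= subdiv_okE; apply/andP; split.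
    apply/allP => v v_in; rewrite -load_outer_states //.
    by move: adm_p; rewrite /admissible p_outer => /allP /(_ v v_in).
  by apply/forallP => k; case/and4P: (fam k) => _ _ -> ->.
move: (ok_P); rewrite subdiv_okE => /andP[ok_old /forallP ok_new].
have le1 k := outer_claims_le1 k ok_old.
apply/andP; split.
  by apply/allP => v v_in; rewrite load_outer_states //; exact: (allP ok_old v v_in).
apply/familyP => k; rewrite unfold_in /gadget_ok ffunE /= !eqn_eqb1.
by case: (le1 k) => -> ->; case/andP: (ok_new k) => -> ->.
Qed.

(* A joint choice of states of all gadget edges determines the states of the outer edges. *)
Lemma wcount_subdiv_edges w :
  wcount (@nth_edge (subdiv_edges n 0 es)) (n + 2 * m) (split_ok n okO okN) w =
  wcount E n okO (gadget_weight okN w).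
Proof.
have lt_flat (k : 'I_m) (j : 'I_4) : 4 * k + j < size (subdiv_edges n 0 es).
  by rewrite size_subdiv_edges; have := ltn_ord k; have := ltn_ord j; lia.
pose flat kj := Ordinal (lt_flat kj.1 kj.2).
rewrite (@wcount_reindex _ _ flat (fun kj => gadget_edge n kj.1 (E kj.1) kj.2)); first last.
- by move=> [k j]; rewrite /nth_edge /= nth_subdiv_edges.
- apply: inj_card_bij; last by rewrite card_prod !card_ord size_subdiv_edges; lia.
  move=> [k j] [k' j'] /(congr1 val) /= eq_flat.
  have := ltn_ord j; have := ltn_ord j' => ltj ltj'.
  by congr (_, _); apply: val_inj => /=; lia.
rewrite wcount_pair /wcount.
under [RHS]eq_bigr => p _ do rewrite /gadget_weight bigA_distr_big_dep.
rewrite (exchange_big_dep predT) //= [LHS]big_mkcond /=; apply: eq_bigr => P _.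
rewrite (eq_bigl _ _ (admissible_familyE P)) -/(subdiv_ok P).
case: (subdiv_ok P); last by rewrite big_pred0 // => p; rewrite andbF.
by rewrite (big_pred1 (outer_states P)) // => p; rewrite andbT.
Qed.

End Subdivision.

(** * Maximum matchings of a bipartite subdivision *)

Lemma matching_mem (T : finType) (e : rel T) (S : {set T}) M A :
  is_matching e S M -> A \in M ->
  exists u v, [/\ A = [set u; v], u != v, e u v, u \notin S & v \notin S].
Proof.
case/andP => /forallP edges _ AM; move: (edges A); rewrite AM /=.
by move=> /existsP[u /existsP[v /and5P[/eqP-> ? ? ? ?]]]; exists u, v.
Qed.

Lemma matching_disjoint (T : finType) (e : rel T) (S : {set T}) M A B x :
  is_matching e S M -> A \in M -> B \in M -> x \in A -> x \in B -> A = B.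
Proof.
case/andP => _ /forallP disj AM BM xA xB; move: (disj A); rewrite AM /= => /forallP /(_ B).
rewrite BM /=; case: (eqVneq A B) => //= _ dAB.
by move: (disjointFr dAB xA); rewrite xB.
Qed.

Definition perfect_ok (S : seq nat) (v c : nat) : bool := c == (v \notin S).

Lemma perfect_ok_le1 S v c : perfect_ok S v c -> c <= 1.
Proof. by move/eqP->; case: (v \notin S). Qed.

Definition saturate_ok (S : seq nat) (n0 : nat) : nat -> nat -> bool :=
  split_ok n0 (perfect_ok S) (fun c => c <= 1).

Definition diag_weight (a : state) : nat := a.1 == a.2.

Lemma sum_eqn (a n : nat) : \sum_(v < n) ((a == v :> nat) : nat) = (a < n).
Proof.
elim: n => [|n IH]; first by rewrite big_ord0.
by rewrite big_ord_recr /= IH ltnS; case: ltngtP.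
Qed.

Section Matchings.
Variables (N n0 : nat) (es : seq (nat * nat)) (S : seq nat).
Let m := size es.
Let E := @nth_edge es.
Hypothesis es_lt : forall k, (E k).1 < N /\ (E k).2 < N.
Hypothesis es_bipartite : forall k, ((E k).1 < n0) != ((E k).2 < n0).
Hypothesis es_simple : forall k k', E k = E k' \/ E k = ((E k').2, (E k').1) -> k = k'.
Hypothesis S_lt : forall s, s \in S -> s < n0.
Hypothesis n0_le : n0 <= N.

Definition edge_rel : rel 'I_N := fun x y => ((val x, val y) \in es) || ((val y, val x) \in es).
Definition removed : {set 'I_N} := [set x | val x \in S].
Definition incident k v := ((E k).1 == v) || ((E k).2 == v).
Definition edge_set k : {set 'I_N} := [set x : 'I_N | incident k x].
Definition free_old : {set 'I_N} := [set x : 'I_N | (val x < n0) && (val x \notin S)].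
Definition diagonal (p : {ffun 'I_m -> state}) := [forall k, (p k).1 == (p k).2].
Definition saturating :=
  [set p : {ffun 'I_m -> state} | admissible E N (saturate_ok S n0) p && diagonal p].
Definition matching_of (p : {ffun 'I_m -> state}) : {set {set 'I_N}} :=
  edge_set @: [set k | (p k).1].
Definition states_of (M : {set {set 'I_N}}) : {ffun 'I_m -> state} :=
  [ffun k => (edge_set k \in M, edge_set k \in M)].

Local Notation matching := (is_matching edge_rel removed).
Implicit Types (p : {ffun 'I_m -> state}) (M : {set {set 'I_N}}).

Lemma edge_ends_neq k : (E k).1 != (E k).2.
Proof. by apply/eqP => eq12; move: (es_bipartite k); rewrite eq12 eqxx. Qed.

Lemma edge_set_ends k (u v : 'I_N) : val u = (E k).1 -> val v = (E k).2 ->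
  edge_set k = [set u; v].
Proof.
by move=> eu ev; apply/setP => x; rewrite !inE /incident -!val_eqE eu ev ![_ == val x]eq_sym.
Qed.

Lemma edge_set_inj : injective edge_set.
Proof.
move=> k k' eq_kk'; apply: es_simple; have [lt1 lt2] := es_lt k.
have inc (x : 'I_N) : incident k x -> incident k' x.
  move=> kx; have: x \in edge_set k' by rewrite -eq_kk' inE.
  by rewrite inE.
have: incident k' (E k).1 by apply: (inc (Ordinal lt1)); rewrite /incident eqxx.
have: incident k' (E k).2 by apply: (inc (Ordinal lt2)); rewrite /incident eqxx orbT.
rewrite /incident; case: (E k) (edge_ends_neq k) => a b /=; case: (E k') => c d /=.
by move=> nab /orP[] /eqP bc /orP[] /eqP ac; subst; rewrite ?eqxx in nab; auto.
Qed.

Lemma edge_rel_edge_set u v : edge_rel u v -> exists k, edge_set k = [set u; v].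
Proof.
have edge_at (a b : 'I_N) : (val a, val b) \in es -> exists k, edge_set k = [set a; b].
  move=> ab_in; have ltk : index (val a, val b) es < m by rewrite index_mem.
  exists (Ordinal ltk); apply/setP => x.
  by rewrite !inE /incident /E /nth_edge /= nth_index //= -!val_eqE /= ![_ == val x]eq_sym.
by case/orP => [/edge_at // | /edge_at [k eq_k]]; exists k; rewrite eq_k setUC.
Qed.

Lemma matching_edge M A : matching M -> A \in M -> exists k, A = edge_set k.
Proof.
move=> mM AM; have [u [v [-> _ uv _ _]]] := matching_mem mM AM.
by have [k <-] := edge_rel_edge_set uv; exists k.
Qed.

Lemma edge_set_old k : exists2 x, x \in edge_set k & val x < n0.
Proof.
have [lt1 lt2] := es_lt k.
have [old1 | new1] := boolP ((E k).1 < n0).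
  by exists (Ordinal lt1); rewrite // inE /incident eqxx.
have old2 : (E k).2 < n0 by move: (es_bipartite k); rewrite (negbTE new1); case: (_ < n0).
by exists (Ordinal lt2); rewrite // inE /incident eqxx orbT.
Qed.

Definition old_end (A : {set 'I_N}) : option 'I_N := [pick x in A | val x < n0].

Lemma old_end_spec M A : matching M -> A \in M ->
  exists x, [/\ old_end A = Some x, x \in A & x \in free_old].
Proof.
move=> mM AM; have [u [v [eqA _ _ uS vS]]] := matching_mem mM AM.
have [k eq_k] := matching_edge mM AM; have [x xk xold] := edge_set_old k.
rewrite /old_end; case: pickP => [y /andP[yA yold] | no_old]; last first.
  by move: (no_old x); rewrite eq_k xk xold.
exists y; split => //; rewrite inE yold /=.
by move: yA; rewrite eqA !inE => /orP[] /eqP->; [move: uS | move: vS]; rewrite inE.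
Qed.

Lemma old_end_inj M : matching M -> {in M &, injective old_end}.
Proof.
move=> mM A B AM BM; have [x [-> xA _]] := old_end_spec mM AM.
have [y [-> yB _]] := old_end_spec mM BM.
by case=> eq_xy; apply: (matching_disjoint mM AM BM xA); rewrite eq_xy.
Qed.

Lemma old_end_sub M : matching M -> old_end @: M \subset Some @: free_old.
Proof.
move=> mM; apply/subsetP => o /imsetP[A AM ->].
by have [x [-> _ xfree]] := old_end_spec mM AM; apply: imset_f.
Qed.

Lemma card_matching_le M : matching M -> #|M| <= #|free_old|.
Proof.
move=> mM; rewrite -(card_in_imset (old_end_inj mM)).
by rewrite (leq_trans (subset_leq_card (old_end_sub mM))) // card_imset //; exact: Some_inj.
Qed.

Lemma max_matching_covers M x : matching M -> #|M| = #|free_old| -> x \in free_old ->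
  exists2 A, A \in M & x \in A.
Proof.
move=> mM cardM xfree.
have/subset_cardP eq_img : #|old_end @: M| = #|Some @: free_old|.
  by rewrite (card_in_imset (old_end_inj mM)) card_imset //; exact: Some_inj.
have: Some x \in old_end @: M by rewrite (eq_img (old_end_sub mM)) imset_f.
case/imsetP => A AM; have [y [-> yA _]] := old_end_spec mM AM.
by case=> ->; exists A.
Qed.

Lemma saturate_ok_le1 v c : saturate_ok S n0 v c -> c <= 1.
Proof. by rewrite /saturate_ok /split_ok; case: ifP => // _; exact: perfect_ok_le1. Qed.

Lemma end_load_le p v k : end_load (E k) (p k) v <= load E p v.
Proof. by rewrite /load (bigD1 k) //= leq_addr. Qed.

Lemma end_load2_le p v k k' : k != k' ->
  end_load (E k) (p k) v + end_load (E k') (p k') v <= load E p v.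
Proof.
move=> nek; rewrite /load (bigD1 k) //= (bigD1 k') /=; last by rewrite eq_sym.
by rewrite addnA leq_addr.
Qed.

Lemma saturating_diag p k : p \in saturating -> (p k).2 = (p k).1.
Proof. by rewrite inE => /andP[_ /forallP /(_ k) /eqP->]. Qed.

Lemma saturating_load p v : p \in saturating -> v < N -> saturate_ok S n0 v (load E p v).
Proof. by rewrite inE => /andP[/allP adm _] ltvN; apply: adm; rewrite mem_iota. Qed.

Lemma end_load_diag p k v : (p k).2 = (p k).1 ->
  end_load (E k) (p k) v = (p k).1 && incident k v.
Proof.
rewrite /end_load /incident => ->.
by have := edge_ends_neq k; case: (E k) => a b /= neab; case: (p k).1 => /=; lia.
Qed.

Lemma matching_of_saturating p : p \in saturating -> matching (matching_of p).
Proof.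
move=> p_sat; have diag_p k := saturating_diag k p_sat.
have load_gt0 k x : (p k).1 -> incident k x -> 0 < load E p x.
  by move=> pk kx; apply: leq_trans (end_load_le p x k); rewrite end_load_diag // pk kx.
have end_free k (x : 'I_N) : (p k).1 -> incident k x -> x \notin removed.
  move=> pk kx; rewrite inE; apply/negP => xS.
  have := saturating_load p_sat (ltn_ord x).
  rewrite /saturate_ok /split_ok /perfect_ok S_lt // xS => /eqP load0.
  by have := load_gt0 k x pk kx; rewrite load0.
apply/andP; split.
  apply/forallP => A; apply/implyP => /imsetP[k]; rewrite inE => pk ->.
  have [lt1 lt2] := es_lt k.
  apply/existsP; exists (Ordinal lt1); apply/existsP; exists (Ordinal lt2).
  rewrite (@edge_set_ends k (Ordinal lt1) (Ordinal lt2)) // eqxx -val_eqE /= edge_ends_neq.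
  rewrite /edge_rel /= -surjective_pairing /E /nth_edge mem_nth //.
  by rewrite !(end_free k) // /incident eqxx ?orbT.
apply/forallP => A; apply/implyP => /imsetP[k]; rewrite inE => pk ->.
apply/forallP => B; apply/implyP => /imsetP[k']; rewrite inE => pk' ->.
apply/implyP => ne_set; have ne_k : k != k' by apply: contraNneq ne_set => ->.
rewrite -setI_eq0; apply/eqP/setP => x; rewrite !inE; apply/negP => /andP[kx k'x].
have := end_load2_le p x ne_k; rewrite !end_load_diag // pk pk' kx k'x.
by move/leq_trans/(_ (saturate_ok_le1 (saturating_load p_sat (ltn_ord x)))).
Qed.

Lemma card_free_old : #|free_old| = \sum_(v < n0) ((v : nat) \notin S : nat).
Proof.
rewrite cardsE -sum1_card (big_ord_widen _ (fun v => (v \notin S) : nat) n0_le).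
rewrite big_mkcond [RHS]big_mkcond /=; apply: eq_bigr => x _.
by rewrite unfold_in; case: (x < n0); case: (val x \notin S).
Qed.

Lemma card_matching_of p : p \in saturating -> #|matching_of p| = #|free_old|.
Proof.
move=> p_sat; rewrite card_imset; last exact: edge_set_inj.
have load_old : \sum_(v < n0) load E p v = \sum_(v < n0) ((v : nat) \notin S : nat).
  apply: eq_bigr => v _; have := saturating_load p_sat (leq_trans (ltn_ord v) n0_le).
  by rewrite /saturate_ok /split_ok ltn_ord => /eqP.
have selected : \sum_(v < n0) load E p v = \sum_k ((p k).1 : nat).
  rewrite exchange_big /=; apply: eq_bigr => k _.
  rewrite /end_load big_split /= -!big_distrl /= !sum_eqn (saturating_diag k p_sat).
  by have := es_bipartite k; case: (_.1 < n0); case: (_.2 < n0); case: (p k).1.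
rewrite card_free_old -load_old selected cardsE -sum1_card [LHS]big_mkcond /=.
by apply: eq_bigr => k _; rewrite unfold_in; case: (p k).1.
Qed.

Lemma states_of_saturating M : matching M -> #|M| = #|free_old| -> states_of M \in saturating.
Proof.
move=> mM cardM; have diag_M : diagonal (states_of M) by apply/forallP => k; rewrite ffunE.
rewrite inE diag_M andbT; apply/allP => v; rewrite mem_iota add0n => /andP[_ ltvN].
pose x := Ordinal ltvN.
have -> : load E (states_of M) v = #|[pred k | (edge_set k \in M) && (x \in edge_set k)]|.
  rewrite -sum1_card [RHS]big_mkcond /= /load; apply: eq_bigr => k _.
  by rewrite end_load_diag !ffunE //= !inE; case: (_ && _).
have le1 : #|[pred k | (edge_set k \in M) && (x \in edge_set k)]| <= 1.
  apply/card_le1_eqP => k1 k2 /andP[k1M xk1] /andP[k2M xk2].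
  by apply: edge_set_inj; apply: (matching_disjoint mM k2M k1M xk2 xk1).
rewrite /saturate_ok /split_ok /perfect_ok; case: ifP => // ltvn0.
have [vS | vnS] := boolP (v \in S) => /=.
  apply/eqP/eq_card0 => k; apply/negP => /andP[kM xk].
  have [u [u' [eq_k _ _ uS u'S]]] := matching_mem mM kM.
  by move: xk; rewrite eq_k !inE => /orP[] /eqP xu; [move: uS | move: u'S]; rewrite -xu inE vS.
have xfree : x \in free_old by rewrite inE ltvn0 vnS.
have [A AM xA] := max_matching_covers mM cardM xfree.
have [k eq_k] := matching_edge mM AM.
by rewrite eqn_leq le1 /=; apply/card_gt0P; exists k; rewrite inE -eq_k AM -?eq_k.
Qed.

Lemma matching_of_states_of M : matching M -> matching_of (states_of M) = M.
Proof.
move=> mM; apply/setP => A; apply/imsetP/idP => [[k] | AM].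
  by rewrite inE ffunE => kM ->.
by have [k eq_k] := matching_edge mM AM; exists k; rewrite // inE ffunE -eq_k.
Qed.

Lemma matching_of_inj : {in saturating &, injective matching_of}.
Proof.
move=> p1 p2 p1_sat p2_sat eq_M; apply/ffunP => k.
have sel p : (p k).1 = (edge_set k \in matching_of p).
  by rewrite mem_imset ?inE //; exact: edge_set_inj.
have eq1 : (p1 k).1 = (p2 k).1 by rewrite !sel eq_M.
move: eq1 (saturating_diag k p1_sat) (saturating_diag k p2_sat).
by case: (p1 k) (p2 k) => [a b] [c d] /= -> -> ->.
Qed.

Lemma prod_diag_weight p : \prod_k diag_weight (p k) = diagonal p.
Proof.
have [/forallP diag_p | /forallPn[k nek]] := boolP (diagonal p).
  by apply: big1 => k _; rewrite /diag_weight diag_p.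
by rewrite (bigD1 k) //= /diag_weight (negbTE nek) mul0n.
Qed.

(* Each edge has one old end, so a matching has at most #|free_old| edges, with equality iff it
   covers free_old; the positivity hypothesis provides such a matching. *)
Lemma num_max_matchings_wcount :
  0 < wcount E N (saturate_ok S n0) diag_weight ->
  num_max_matchings edge_rel removed = wcount E N (saturate_ok S n0) diag_weight.
Proof.
have -> : wcount E N (saturate_ok S n0) diag_weight = #|saturating|.
  rewrite /wcount cardsE -sum1_card [RHS]big_mkcond [LHS]big_mkcond /=.
  apply: eq_bigr => p _; rewrite unfold_in prod_diag_weight.
  by case: admissible; case: diagonal.
move=> /card_gt0P[p0 p0_sat]; rewrite /num_max_matchings.
have -> : [set M | matching M && [forall M', matching M' ==> (#|M'| <= #|M|)]] =
          matching_of @: saturating.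
  apply/setP => M; rewrite inE; apply/andP/imsetP => [[mM /forallP maxM] | [p p_sat ->]].
    have cardM : #|M| = #|free_old|.
      apply/eqP; rewrite eqn_leq card_matching_le //= -(card_matching_of p0_sat).
      exact: implyP (maxM _) (matching_of_saturating p0_sat).
    by exists (states_of M); [exact: states_of_saturating | rewrite matching_of_states_of].
  split; first exact: matching_of_saturating.
  by apply/forallP => M'; apply/implyP => mM'; rewrite card_matching_of // card_matching_le.
by rewrite card_in_imset //; exact: matching_of_inj.
Qed.

End Matchings.

(** * The graphs F_g *)

Definition wf_graph (d : nat * seq (nat * nat)) : Prop :=
  forall k : 'I_(size d.2),
    [/\ (nth_edge k).1 < d.1, (nth_edge k).2 < d.1 & (nth_edge k).1 != (nth_edge k).2].

Lemma gadget_edge_bounds n m e a j : e.1 < n -> e.2 < n -> a < m -> j < 4 ->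
  let f := gadget_edge n a e j in
  [/\ f.1 < n + 2 * m, f.2 < n + 2 * m & (f.1 < n) != (f.2 < n)].
Proof.
by move=> lt1 lt2 lta; rewrite /gadget_edge; case: j => [|[|[|[|j]]]] //= _; split; lia.
Qed.

Lemma gadget_edge_inj n e e' a a' j j' :
  e.1 < n -> e.2 < n -> e.1 != e.2 -> e'.1 < n -> e'.2 < n ->
  j < 4 -> j' < 4 -> (a = a' -> e = e') ->
  let f := gadget_edge n a e j in let f' := gadget_edge n a' e' j' in
  f = f' \/ f = (f'.2, f'.1) -> 4 * a + j = 4 * a' + j'.
Proof.
move=> lt1 lt2 /eqP ne12 lt1' lt2' + + same_e; rewrite /gadget_edge.
case: j => [|[|[|[|j]]]] //= _; case: j' => [|[|[|[|j']]]] //= _.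
all: case=> -[eq1 eq2]; try lia.
all: have eq_a : a = a' by lia.
all: by move: (same_e eq_a) eq1 eq2 => <-; lia.
Qed.

Lemma nth_edge_subdiv n es (k : 'I_(size (subdiv_edges n 0 es))) :
  [/\ nth_edge k = gadget_edge n (k %/ 4) (nth (0, 0) es (k %/ 4)) (k %% 4),
      k %/ 4 < size es & k %% 4 < 4].
Proof.
have ltk : (k : nat) < 4 * size es by rewrite -(size_subdiv_edges n 0).
have lta : k %/ 4 < size es by lia.
have eqk : (k : nat) = 4 * (k %/ 4) + k %% 4 by rewrite mulnC -divn_eq.
have ltj : k %% 4 < 4 by rewrite ltn_mod.
by split => //; rewrite /nth_edge {1}eqk nth_subdiv_edges.
Qed.

Lemma wf_subdivide d : wf_graph d -> wf_graph (subdivide d).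
Proof.
rewrite subdivideE; case: d => n es wf_d /= k.
have [-> lta ltj] := nth_edge_subdiv k; have [lt1 lt2 _] := wf_d (Ordinal lta).
have [lt1' lt2' bip] := gadget_edge_bounds lt1 lt2 lta ltj.
by split => //; apply/eqP => eq12; move: bip; rewrite eq12 eqxx.
Qed.

Lemma Fdata_S g : 0 < g -> Fdata g.+1 = subdivide (Fdata g).
Proof. by case: g. Qed.

Lemma wf_Fdata g : 0 < g -> wf_graph (Fdata g).
Proof.
elim: g => [|[|g] IH] // _; first by case=> [[|[|[|[|k]]]]].
by rewrite Fdata_S //; apply/wf_subdivide/IH.
Qed.

Lemma hubs_lt_Fdata g : 0 < g -> 4 <= (Fdata g).1.
Proof.
by elim: g => [|[|g] IH] // _; rewrite Fdata_S // subdivideE /=; have := IH isT; lia.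
Qed.

Lemma num_max_matchings_subdivide d S : wf_graph d -> (forall s, s \in S -> s < d.1) ->
  0 < wcount (@nth_edge (subdivide d).2) (subdivide d).1 (saturate_ok S d.1) diag_weight ->
  num_max_matchings (edge_rel (N := (subdivide d).1) (subdivide d).2) (removed _ S) =
  wcount (@nth_edge (subdivide d).2) (subdivide d).1 (saturate_ok S d.1) diag_weight.
Proof.
rewrite subdivideE; case: d => n es wf_d S_lt /=.
have edge_facts (k : 'I_(size (subdiv_edges n 0 es))) :
    let f := nth_edge k in
    [/\ f.1 < n + 2 * size es, f.2 < n + 2 * size es & (f.1 < n) != (f.2 < n)].
  have [-> lta ltj] := nth_edge_subdiv k; have [lt1 lt2 _] := wf_d (Ordinal lta).
  exact: gadget_edge_bounds.
apply: num_max_matchings_wcount => //; try lia.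
- by move=> k; have [] := edge_facts k.
- by move=> k; have [] := edge_facts k.
move=> k k'; have [-> lta ltj] := nth_edge_subdiv k; have [-> lta' ltj'] := nth_edge_subdiv k'.
have [lt1 lt2 ne12] := wf_d (Ordinal lta); have [lt1' lt2' _] := wf_d (Ordinal lta').
have same_e : k %/ 4 = k' %/ 4 -> nth (0, 0) es (k %/ 4) = nth (0, 0) es (k' %/ 4) by move->.
move/(gadget_edge_inj lt1 lt2 ne12 lt1' lt2' ltj ltj' same_e) => eq_flat.
by apply: val_inj; rewrite /= (divn_eq k 4) (divn_eq k' 4) !(mulnC _ 4).
Qed.

Lemma num_max_matchings_F1 S : (forall s, s \in S -> s < 2) ->
  0 < wcount (@nth_edge F1data.2) 4 (saturate_ok S 2) diag_weight ->
  num_max_matchings (edge_rel (N := 4) F1data.2) (removed 4 S) =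
  wcount (@nth_edge F1data.2) 4 (saturate_ok S 2) diag_weight.
Proof.
move=> S_lt; apply: num_max_matchings_wcount => //; try by case=> [[|[|[|[|k]]]]].
move=> [k ltk] [k' ltk'] same; apply: val_inj => /=; move: ltk ltk' same.
by case: k => [|[|[|[|k]]]]; case: k' => [|[|[|[|k']]]] //= _ _ [] [].
Qed.

Lemma wcount_subdivide d (okO : nat -> nat -> bool) okN w : wf_graph d ->
  (forall v c, v < d.1 -> okO v c -> c <= 1) ->
  wcount (@nth_edge (subdivide d).2) (subdivide d).1 (split_ok d.1 okO okN) w =
  wcount (@nth_edge d.2) d.1 okO (gadget_weight okN w).
Proof.
rewrite subdivideE; case: d => n es wf_d okO_le1 /=.
by apply: wcount_subdiv_edges => // k; have [] := wf_d k.
Qed.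

Lemma wcount_subdivide_saturate d S w : wf_graph d ->
  wcount (@nth_edge (subdivide d).2) (subdivide d).1 (saturate_ok S d.1) w =
  wcount (@nth_edge d.2) d.1 (perfect_ok S) (gadget_weight (fun c => c <= 1) w).
Proof. by move=> wf_d; apply: wcount_subdivide => // v c _; exact: perfect_ok_le1. Qed.

Lemma wcount_subdivide_perfect d S w : wf_graph d -> (forall s, s \in S -> s < d.1) ->
  wcount (@nth_edge (subdivide d).2) (subdivide d).1 (perfect_ok S) w =
  wcount (@nth_edge d.2) d.1 (perfect_ok S) (gadget_weight (fun c => c == 1) w).
Proof.
move=> wf_d S_lt; rewrite -wcount_subdivide //; last by move=> v c _; exact: perfect_ok_le1.
apply: eq_wcount => // v c _; rewrite /split_ok /perfect_ok; case: ltnP => // le_v.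
by have /negPf-> : v \notin S by apply/negP => /S_lt; lia.
Qed.

Lemma wcount_Fdata_perfect g S w : 0 < g -> (forall s, s \in S -> s < 4) ->
  wcount (@nth_edge (Fdata g).2) (Fdata g).1 (perfect_ok S) w =
  wcount (@nth_edge F1data.2) 4 (perfect_ok S) (iter g.-1 (gadget_weight (fun c => c == 1)) w).
Proof.
move=> + S_lt; elim: g w => [|[|g] IH] // w _.
have S_lt' s : s \in S -> s < (Fdata g.+1).1.
  by move/S_lt; have := hubs_lt_Fdata (isT : 0 < g.+1); lia.
rewrite Fdata_S // (wcount_subdivide_perfect _ (wf_Fdata (isT : 0 < g.+1)) S_lt').
by rewrite IH //= -iterS iterSr.
Qed.

(* The weight of an edge of F_1 in F_(g+1), which is F_1 with every edge replaced by a copy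
   of F_g. *)
Definition level_weight (g : nat) : state -> nat :=
  iter g.-1 (gadget_weight (fun c => c == 1)) (gadget_weight (fun c => c <= 1) diag_weight).

Definition hub_count (g : nat) (S : seq nat) : nat :=
  num_max_matchings (edge_rel (N := (Fdata g).1) (Fdata g).2) (removed _ S).

Lemma hub_count_S g S : 0 < g -> (forall s, s \in S -> s < 4) ->
  0 < wcount (@nth_edge F1data.2) 4 (perfect_ok S) (level_weight g) ->
  hub_count g.+1 S = wcount (@nth_edge F1data.2) 4 (perfect_ok S) (level_weight g).
Proof.
move=> g_gt0 S_lt; have wf_g := wf_Fdata g_gt0.
rewrite -wcount_Fdata_perfect // -(wcount_subdivide_saturate _ _ wf_g).
move=> pos; rewrite /hub_count Fdata_S // num_max_matchings_subdivide //.
by move=> s /S_lt; have := hubs_lt_Fdata g_gt0; lia.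
Qed.

(** * The 4-cycle F_1 *)

Definition states4 : seq state := [:: (false, false); (false, true); (true, false); (true, true)].

Definition quads : seq (state * state * state * state) :=
  [seq (abc, d) | abc <- [seq (ab, c) | ab <- [seq (a, b) | a <- states4, b <- states4],
                                        c <- states4], d <- states4].

Definition ffun_of_quad (t : state * state * state * state) : {ffun 'I_4 -> state} :=
  [ffun i : 'I_4 => nth (false, false) [:: t.1.1.1; t.1.1.2; t.1.2; t.2] i].

Definition quad_weight (w : state -> nat) (t : state * state * state * state) : nat :=
  w t.1.1.1 * w t.1.1.2 * w t.1.2 * w t.2.

Lemma sum_ffun4 (G : {ffun 'I_4 -> state} -> nat) :
  \sum_q G q = \sum_(t <- quads) G (ffun_of_quad t).
Proof.
have -> : \sum_(t <- quads) G (ffun_of_quad t) = \sum_t G (ffun_of_quad t).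
  apply: perm_big; apply: uniq_perm; rewrite ?index_enum_uniq //.
  by move=> [[[[[] []] [[] []]] [[] []]] [[] []]]; rewrite mem_index_enum.
rewrite (reindex ffun_of_quad) //.
exists (fun q : {ffun 'I_4 -> state} => (q j0, q j1, q j2, q j3)) => [t _ | q _].
  by case: t => [[[a b] c] d]; rewrite !ffunE.
by apply/ffunP => -[[|[|[|[|i]]]] lti] //; rewrite ffunE; congr (q _); apply: val_inj.
Qed.

Lemma wcount4 (E : 'I_4 -> nat * nat) N ok w :
  wcount E N ok w =
  \sum_(t <- quads | all (fun v => ok v (end_load (E j0) t.1.1.1 v + end_load (E j1) t.1.1.2 v
                                         + end_load (E j2) t.1.2 v + end_load (E j3) t.2 v))
                       (iota 0 N)) quad_weight w t.
Proof.
rewrite /wcount big_mkcond sum_ffun4 [RHS]big_mkcond; apply: eq_bigr => t _.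
congr (if _ then _ else _); last by rewrite big_ord4 !ffunE.
by apply: eq_all => v; rewrite /load big_ord4 !ffunE.
Qed.

Lemma gadget_weight4 okN w a :
  gadget_weight okN w a =
  \sum_(t <- quads | [&& t.1.1.1.1 + t.1.2.1 == a.1, t.1.1.2.2 + t.2.2 == a.2,
                         okN (t.1.1.1.2 + t.1.1.2.1) & okN (t.1.2.2 + t.2.1)]) quad_weight w t.
Proof.
rewrite /gadget_weight big_mkcond sum_ffun4 [RHS]big_mkcond; apply: eq_bigr => t _.
by rewrite /gadget_ok /claim_u /claim_v /claim_x /claim_y big_ord4 !ffunE.
Qed.

Definition sym_weight (w : state -> nat) : Prop := w (false, true) = w (true, false).

Lemma gadget_weight_ff w : sym_weight w ->
  gadget_weight (fun c => c == 1) w (false, false) = 4 * w (false, false) ^ 2 * w (true, false) ^ 2.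
Proof. by move=> sym_w; rewrite gadget_weight4 unlock /= /quad_weight sym_w; ring. Qed.

Lemma gadget_weight_ft w : sym_weight w ->
  gadget_weight (fun c => c == 1) w (false, true) =
  4 * w (false, false) ^ 2 * w (true, false) * w (true, true)
  + 4 * w (false, false) * w (true, false) ^ 3.
Proof. by move=> sym_w; rewrite gadget_weight4 unlock /= /quad_weight sym_w; ring. Qed.

Lemma gadget_weight_tf w : sym_weight w ->
  gadget_weight (fun c => c == 1) w (true, false) =
  4 * w (false, false) ^ 2 * w (true, false) * w (true, true)
  + 4 * w (false, false) * w (true, false) ^ 3.
Proof. by move=> sym_w; rewrite gadget_weight4 unlock /= /quad_weight sym_w; ring. Qed.

Lemma gadget_weight_tt w : sym_weight w ->
  gadget_weight (fun c => c == 1) w (true, true) =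
  2 * w (false, false) ^ 2 * w (true, true) ^ 2 + 2 * w (true, false) ^ 4
  + 12 * w (false, false) * w (true, false) ^ 2 * w (true, true).
Proof. by move=> sym_w; rewrite gadget_weight4 unlock /= /quad_weight sym_w; ring. Qed.

Lemma wcount_F1_gadget w : sym_weight w ->
  [/\ wcount (@nth_edge F1data.2) 4 (perfect_ok [:: 0; 1]) w
        = gadget_weight (fun c => c == 1) w (false, false),
      wcount (@nth_edge F1data.2) 4 (perfect_ok [:: 0]) w
        = gadget_weight (fun c => c == 1) w (true, false)
    & wcount (@nth_edge F1data.2) 4 (perfect_ok [::]) w
        = gadget_weight (fun c => c == 1) w (true, true)].
Proof.
move=> sym_w; rewrite gadget_weight_ff ?gadget_weight_tf ?gadget_weight_tt // !wcount4 unlock /=.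
by rewrite /quad_weight sym_w; split; ring.
Qed.

Lemma gadget_weight_sym w : sym_weight w -> sym_weight (gadget_weight (fun c => c == 1) w).
Proof. by move=> sym_w; rewrite /sym_weight gadget_weight_ft ?gadget_weight_tf. Qed.

Lemma gadget_weight_gt0 w : sym_weight w -> (forall a, 0 < w a) ->
  forall a, 0 < gadget_weight (fun c => c == 1) w a.
Proof.
move=> sym_w w_gt0 [[] []];
  rewrite ?gadget_weight_ff ?gadget_weight_ft ?gadget_weight_tf ?gadget_weight_tt //.
all: by rewrite ?addn_gt0 !muln_gt0 ?expn_gt0 !w_gt0.
Qed.

Lemma level_weight1 a : level_weight 1 a = if a == (false, false) then 1 else 2.
Proof. by case: a => [[] []]; rewrite /level_weight /= gadget_weight4 unlock; vm_compute. Qed.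

Lemma level_weight_S g : 0 < g ->
  level_weight g.+1 = gadget_weight (fun c => c == 1) (level_weight g).
Proof. by case: g. Qed.

Lemma level_weight_sym_gt0 g : 0 < g ->
  sym_weight (level_weight g) /\ forall a, 0 < level_weight g a.
Proof.
elim: g => [|[|g] IH] // _.
  by split => [|a]; rewrite /sym_weight !level_weight1 //; case: ifP.
have [sym_g gt0_g] := IH isT; rewrite level_weight_S //.
by split; [exact: gadget_weight_sym | exact: gadget_weight_gt0].
Qed.

Lemma hub_countsE g :
  [/\ Fphi g = hub_count g [:: 0; 1], Fvarphi g = hub_count g [:: 0] & Ftheta g = hub_count g [::]].
Proof.
split; first by [].
all: by rewrite /Fvarphi /Ftheta /hub_count; congr num_max_matchings; apply/setP => x; rewrite !inE.
Qed.

Lemma hub_counts_F1 : [/\ hub_count 1 [:: 0; 1] = 1, hub_count 1 [:: 0] = 2 & hub_count 1 [::] = 2].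
Proof.
have S_lt S : all (fun s => s < 2) S -> forall s, s \in S -> s < 2 by move/allP.
rewrite /hub_count (_ : Fdata 1 = F1data) //.
rewrite (num_max_matchings_F1 (S_lt [:: 0; 1] isT)) ?(num_max_matchings_F1 (S_lt [:: 0] isT))
  ?(num_max_matchings_F1 (S_lt [::] isT)).
all: by rewrite !wcount4 unlock; vm_compute.
Qed.

Lemma hub_counts_level_weight g : 0 < g ->
  [/\ Fphi g = level_weight g (false, false), Fvarphi g = level_weight g (true, false)
    & Ftheta g = level_weight g (true, true)].
Proof.
have [-> -> ->] := hub_countsE g.
case: g => [|[|g]] // _; first by rewrite !level_weight1; exact: hub_counts_F1.
have [sym_g gt0_g] := level_weight_sym_gt0 (isT : 0 < g.+1).
have [F1_01 F1_0 F1_e] := wcount_F1_gadget sym_g.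
have gt0 a := gadget_weight_gt0 sym_g gt0_g a.
have S_lt S : all (fun s => s < 4) S -> forall s, s \in S -> s < 4 by move/allP.
by rewrite level_weight_S // !hub_count_S ?F1_01 ?F1_0 ?F1_e //; apply: S_lt.
Qed.

Theorem theorem2 :
  [/\ Fphi 1 = 1, Fvarphi 1 = 2, Ftheta 1 = 2 &
   forall g : nat, 1 <= g ->
     [/\ Fphi g.+1 = 4 * Fphi g ^ 2 * Fvarphi g ^ 2,
         Fvarphi g.+1 = 4 * Fphi g ^ 2 * Fvarphi g * Ftheta g + 4 * Fphi g * Fvarphi g ^ 3 &
         Ftheta g.+1 = 2 * Fphi g ^ 2 * Ftheta g ^ 2 + 2 * Fvarphi g ^ 4
                       + 12 * Fphi g * Fvarphi g ^ 2 * Ftheta g]].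
Proof.
have [-> -> ->] := hub_counts_level_weight (isT : 0 < 1).
split; rewrite ?level_weight1 // => g g_gt0.
have [-> -> ->] := hub_counts_level_weight g_gt0.
have [-> -> ->] := hub_counts_level_weight (ltn0Sn g).
have [sym_g _] := level_weight_sym_gt0 g_gt0.
by rewrite level_weight_S // gadget_weight_ff ?gadget_weight_tf ?gadget_weight_tt.
Qed.
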